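(* For every fixed $x\in\mathbb{R}$ and $A>1$ there exists $N_3>0$ depending only on $x$ and $A$ such that for all $n>N_3$ and all $w\in[1,A]$: $s_0/n<G_n(x)/2<AG_n(x)/2<\pi/2$ and $$D_n\big(wG_n(x)/2\big)\le e^{1-(w-1)\ln n}\,D_n\big(G_n(x)/2\big),$$ where $G_n(x)=\dfrac{8x-5\ln(2\ln n)}{2n(2\ln n)^{1/2}}+\dfrac{(32\ln n)^{1/2}}{n}$.
   Context: For $\alpha\in(0,\pi)$ let $D_n(\alpha)=\det_{1\le j,l\le n}\left(\frac{1}{2\pi}\int_\alpha^{2\pi-\alpha}e^{i(j-l)\theta}\,d\theta\right)$. By a result of Deift–Its–Krasovsky–Zhou there are constants $c_0\in\mathbb{R}$ and $s_0>0$ such that for every $\varepsilon>0$, uniformly in $s_0/n<\alpha<\pi-\varepsilon$, $$\ln D_n(\alpha)=n^2\ln\cos\frac{\alpha}{2}-\frac14\ln\Big(n\sin\frac{\alpha}{2}\Big)+c_0+O\Big(\frac{1}{n\sin(\alpha/2)}\Big);$$ $s_0$ denotes such a fixed constant. *)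

From HB Require Import structures.
From mathcomp Require Import all_boot all_order all_algebra.
From mathcomp Require Import all_classical all_reals all_analysis.
From mathcomp Require Import complex.

Set Implicit Arguments.
Unset Strict Implicit.
Unset Printing Implicit Defensive.

Import Order.TTheory GRing.Theory Num.Theory.
Import numFieldNormedType.Exports.
Local Open Scope ring_scope.

(* The Toeplitz entry  (1/2pi) \int_alpha^{2pi-alpha} e^{i k theta} d theta,
   k = j - l, computed as a complex number (real part from cos, imaginary
   part from sin), using the Lebesgue integral over [alpha, 2pi - alpha]. *)
Definition toep_entry (R : realType) (alpha : R) (k : int) : R[i] :=
  Complex
    ((\int[@lebesgue_measure R]_(t in `[alpha, 2 * pi - alpha]%classic)
        cos (k%:~R * t)) / (2 * pi))
    ((\int[@lebesgue_measure R]_(t in `[alpha, 2 * pi - alpha]%classic)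
        sin (k%:~R * t)) / (2 * pi)).

(* D_n(alpha) = det_{1<=j,l<=n} (toep_entry alpha (j - l)).  Indices are
   shifted to 0..n-1, which does not change j - l.  The determinant is a
   real number mathematically; we take its real part to obtain an element
   of R (the imaginary part is 0). *)
Definition Dn (R : realType) (n : nat) (alpha : R) : R :=
  complex.Re (\det (\matrix_(j < n, l < n)
                     toep_entry alpha ((j : nat)%:Z - (l : nat)%:Z))).

Definition Gn (R : realType) (n : nat) (x : R) : R :=
  (8 * x - 5 * ln (2 * ln n%:R)) / (2 * n%:R * Num.sqrt (2 * ln n%:R))
  + Num.sqrt (32 * ln n%:R) / n%:R.

(* The Deift–Its–Krasovsky–Zhou asymptotics with constants c0 and s0:
   for every eps > 0, uniformly in s0/n < alpha < pi - eps,
   ln D_n(alpha) = n^2 ln cos(alpha/2) - 1/4 ln(n sin(alpha/2)) + c0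
                   + O(1/(n sin(alpha/2)))   as n -> oo
   (in particular D_n(alpha) > 0 there, so that ln D_n makes sense). *)
Definition DIKZ_asymptotics (R : realType) (c0 s0 : R) : Prop :=
  forall eps : R, 0 < eps ->
  exists C : R, exists N : nat, forall n : nat, (N <= n)%N ->
  forall alpha : R, s0 / n%:R < alpha -> alpha < pi - eps ->
    0 < Dn n alpha /\
    `| ln (Dn n alpha)
       - (n%:R ^+ 2 * ln (cos (alpha / 2))
          - 4^-1 * ln (n%:R * sin (alpha / 2)) + c0) |
      <= C / (n%:R * sin (alpha / 2)).

(* Put s = sqrt (2 ln n) and u = G_n(x)/4, the half-angle at which D_n is
   evaluated in D_n(G_n(x)/2).  Since n G_n(x) = 4 s + O((|x| + ln s) / s),
   n u lies between 3s/4 and 5s/4 once s dominates x.  Subtracting the DIKZ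
   expansions at the half-angles u and w u, the error terms and the difference
   of the ln (n sin) terms contribute at most 1/2, while the Taylor bounds on
   cos give
     n^2 (ln cos (w u) - ln cos u) <= - (w^2 - 1) (n u)^2 / 2 + (n w u)^4 / (12 n^2),
   where (n u)^2 >= 9 s^2 / 16 > ln n and (n w u)^2 <= (ln n / 2)^2 <= n. *)

From HB Require Import structures.
From mathcomp Require Import all_boot all_order all_algebra.
From mathcomp Require Import all_classical all_reals all_analysis.
From mathcomp Require Import complex.
From mathcomp Require Import ring lra.
Import Order.TTheory GRing.Theory Num.Theory.
Import numFieldNormedType.Exports.

Set Implicit Arguments.
Unset Strict Implicit.
Unset Printing Implicit Defensive.

Local Open Scope ring_scope.

Section Elementary.
Variable R : realType.
Implicit Types (m p q t y : R).
Local Open Scope classical_set_scope.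

Lemma ger0_is_derive_le0r y (f df : R -> R) : 0 <= y ->
  (forall t, is_derive t 1 f (df t)) -> (forall t, 0 <= t -> 0 <= df t) ->
  f 0 <= f y.
Proof.
move=> y0 fd df0.
have fdy t : t \in `]0, y[%R -> is_derive t 1 f (df t) by move=> _; exact: fd.
have fcont : {within `[0, y], continuous f}.
  by apply: derivable_within_continuous => t _; exact: ex_derive.
rewrite -subr_ge0; have [c] := MVT_segment y0 fdy fcont.
rewrite in_itv /= => /andP[c0 _] ->.
by rewrite mulr_ge0 ?subr0 ?df0.
Qed.

Lemma sin_le_id y : 0 <= y -> sin y <= y.
Proof.
move=> y0; rewrite -subr_ge0.
have := @ger0_is_derive_le0r y (id - sin) (fun t => 1 - cos t) y0.
rewrite !fctE sin0 subr0; apply=> t _.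
by rewrite subr_ge0 cos_le1.
Qed.

Lemma cos_ge_taylor2 y : 0 <= y -> 1 - y ^+ 2 / 2 <= cos y.
Proof.
move=> y0.
have dF t : is_derive t 1 (cos - cst 1 + 2^-1 *: (@id R ^+ 2)) (t - sin t).
  by eapply trigger_derive; [apply: is_deriveD | rewrite /= expr1 /GRing.scale /=; lra].
have dF0 t : 0 <= t -> 0 <= t - sin t by rewrite subr_ge0; exact: sin_le_id.
have := ger0_is_derive_le0r y0 dF dF0.
rewrite !fctE cos0 expr0n /= /GRing.scale /=; lra.
Qed.

Lemma sin_ge_taylor3 y : 0 <= y -> y - y ^+ 3 / 6 <= sin y.
Proof.
move=> y0.
have dF t : is_derive t 1 (sin - id + 6^-1 *: (@id R ^+ 3)) (cos t - 1 + t ^+ 2 / 2).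
  by eapply trigger_derive; [apply: is_deriveD | rewrite /= /GRing.scale /=; lra].
have dF0 t : 0 <= t -> 0 <= cos t - 1 + t ^+ 2 / 2.
  by move=> /cos_ge_taylor2; lra.
have := ger0_is_derive_le0r y0 dF dF0.
rewrite !fctE sin0 expr0n /= /GRing.scale /=; lra.
Qed.

Lemma cos_le_taylor4 y : 0 <= y -> cos y <= 1 - y ^+ 2 / 2 + y ^+ 4 / 24.
Proof.
move=> y0.
have dF t : is_derive t 1
    (cst 1 - 2^-1 *: (@id R ^+ 2) + 24^-1 *: (@id R ^+ 4) - cos)
    (- t + t ^+ 3 / 6 + sin t).
  have dsq := is_deriveX 2 (is_derive_id t (1 : R)).
  have dquart := is_deriveX 4 (is_derive_id t (1 : R)).
  have dP := is_deriveD (is_deriveB (is_derive_cst (1 : R) t 1)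
    (is_deriveZ (2^-1 : R) dsq)) (is_deriveZ (24^-1 : R) dquart).
  apply: trigger_derive (is_deriveB dP (is_derive_cos t)) _.
  by rewrite /= /GRing.scale /= expr1; lra.
have dF0 t : 0 <= t -> 0 <= - t + t ^+ 3 / 6 + sin t.
  by move=> /sin_ge_taylor3; lra.
have := ger0_is_derive_le0r y0 dF dF0.
rewrite !fctE cos0 expr0n /= /GRing.scale /=; lra.
Qed.

Lemma sin_ge_half y : 0 <= y -> y <= 1 -> y / 2 <= sin y.
Proof.
move=> y0 y1; have := sin_ge_taylor3 y0.
have : y ^+ 3 <= y by rewrite -[leRHS]expr1 ler_wiXn2l.
lra.
Qed.

Lemma lnB_le_divr_subr1 p q : 0 < p -> 0 < q -> ln p - ln q <= p / q - 1.
Proof.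
move=> p0 q0; have := expR_ge1Dx (ln (p / q)).
rewrite lnK ?posrE ?divr_gt0 // ln_div ?posrE //; lra.
Qed.

Lemma sqr_ln_le m : 1 <= m -> ln m ^+ 2 <= 4 * m.
Proof.
move=> m1; have L0 : 0 <= ln m / 2 by rewrite divr_ge0 ?ln_ge0.
have := expR_ge1Dx (ln m / 2).
rewrite -(ler_pXn2r (n := 2)) ?nnegrE ?expR_ge0 //; last lra.
rewrite -expRM_natr mulfVK ?pnatr_eq0 // lnK ?posrE; last lra.
nra.
Qed.

Lemma sqrt_2ln_ge S t : 0 <= S -> expR (S ^+ 2) < t -> S <= Num.sqrt (2 * ln t).
Proof.
move=> S0 St; have t0 : 0 < t by rewrite (lt_trans _ St) ?expR_gt0.
have SL : S ^+ 2 <= ln t by rewrite -ler_expR lnK ?posrE // ltW.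
by rewrite -[leLHS]ger0_norm // -sqrtr_sqr ler_sqrt; have := sqr_ge0 S; lra.
Qed.

End Elementary.

Section DIKZDifference.
Variable R : realType.
Implicit Types (m u v w C L : R).

Lemma dikz_sin_term_le1 m u v : 0 < m -> 0 < u -> u <= v -> v <= 1 ->
  ln (m * sin u) - ln (m * sin v) <= 1.
Proof.
move=> m0 u0 uv v1.
have su := sin_le_id (ltW u0).
have sv : v / 2 <= sin v by apply: sin_ge_half; lra.
have su' : u / 2 <= sin u by apply: sin_ge_half; lra.
have msu0 : 0 < m * sin u by rewrite mulr_gt0 //; lra.
have msv0 : 0 < m * sin v by rewrite mulr_gt0 //; lra.
apply: le_trans (lnB_le_divr_subr1 msu0 msv0) _.
rewrite lerBlDr ler_pdivrMr // mulrCA ler_pM2l //; lra.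
Qed.

Lemma lnB_cos_le u v : 0 <= u -> u <= v -> v <= 1 ->
  ln (cos v) - ln (cos u) <= (u ^+ 2 - v ^+ 2) / 2 + v ^+ 4 / 12.
Proof.
move=> u0 uv v1; have v0 : 0 <= v by lra.
have cu1 := cos_ge_taylor2 u0; have cu2 := cos_le1 u.
have cv1 := cos_ge_taylor2 v0; have cv2 := cos_le_taylor4 v0.
have u2 : u ^+ 2 <= v ^+ 2 by rewrite ler_pXn2r ?nnegrE.
have v2 : v ^+ 2 <= 1 by rewrite expr_le1.
have v4 : v ^+ 4 = v ^+ 2 * v ^+ 2 by rewrite -exprD.
have v40 : 0 <= v ^+ 4 by rewrite exprn_ge0.
have cu0 : 0 < cos u by lra.
have cv0 : 0 < cos v by lra.
apply: le_trans (lnB_le_divr_subr1 cv0 cu0) _.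
rewrite lerBlDr ler_pdivrMr //; nra.
Qed.

Lemma dikz_error_le C m t : 0 < m -> 0 < t -> t <= 1 -> 16 * `|C| <= m * t ->
  C / (m * sin t) <= 1 / 8.
Proof.
move=> m0 t0 t1 Cmt.
have st : t / 2 <= sin t by apply: sin_ge_half; lra.
have mst : m * t <= 2 * (m * sin t) by rewrite mulrCA ler_pM2l //; lra.
have := ler_norm C.
rewrite ler_pdivrMr ?mulr_gt0 //; lra.
Qed.

Lemma dikz_cos_term_le m L w u : 0 < m -> 0 < u -> 1 <= w -> w * u <= 1 ->
  L <= (m * u) ^+ 2 -> (m * (w * u)) ^+ 2 <= m ->
  m ^+ 2 * (ln (cos (w * u)) - ln (cos u)) <= 1 / 12 - (w - 1) * L.
Proof.
move=> m0 u0 w1 wu1 Lmu mwu.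
have uwu : u <= w * u by rewrite ler_peMl // ltW.
have := ler_wpM2l (sqr_ge0 m) (lnB_cos_le (ltW u0) uwu wu1).
have -> : m ^+ 2 * ((u ^+ 2 - (w * u) ^+ 2) / 2 + (w * u) ^+ 4 / 12)
    = - (w ^+ 2 - 1) * (m * u) ^+ 2 / 2 + (m ^+ 2 * (w * u) ^+ 4) / 12.
  by ring.
have quart : m ^+ 2 * (w * u) ^+ 4 <= 1.
  rewrite -(ler_pM2l (exprn_gt0 2 m0)) mulr1.
  have -> : m ^+ 2 * (m ^+ 2 * (w * u) ^+ 4) = ((m * (w * u)) ^+ 2) ^+ 2 by ring.
  by rewrite ler_pXn2r ?nnegrE ?sqr_ge0 // ltW.
have quad : (w - 1) * L <= (w ^+ 2 - 1) * (m * u) ^+ 2 / 2.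
  have : (w - 1) * L <= (w - 1) * (m * u) ^+ 2 by rewrite ler_wpM2l // subr_ge0.
  have : 0 <= (w - 1) * (m * u) ^+ 2 by rewrite mulr_ge0 ?sqr_ge0 // subr_ge0.
  rewrite !expr2; nra.
lra.
Qed.

(* The DIKZ approximation of ln D_m(alpha), as a function of t = alpha / 2. *)
Definition dikz_main c0 m t : R :=
  m ^+ 2 * ln (cos t) - 4^-1 * ln (m * sin t) + c0.

Lemma dikz_ratio_le c0 C m L w u (Du Dv : R) :
  0 < m -> 0 < u -> 1 <= w -> w * u <= 1 ->
  L <= (m * u) ^+ 2 -> (m * (w * u)) ^+ 2 <= m -> 16 * `|C| <= m * u ->
  0 < Du -> 0 < Dv ->
  `|ln Du - dikz_main c0 m u| <= C / (m * sin u) ->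
  `|ln Dv - dikz_main c0 m (w * u)| <= C / (m * sin (w * u)) ->
  Dv <= expR (1 - (w - 1) * L) * Du.
Proof.
move=> m0 u0 w1 wu1 Lmu mwu Cmu Du0 Dv0.
rewrite /dikz_main !ler_norml => /andP[Hu _] /andP[_ Hv].
have uwu : u <= w * u by rewrite ler_peMl // ltW.
have erru := dikz_error_le m0 u0 (le_trans uwu wu1) Cmu.
have errv := dikz_error_le m0 (lt_le_trans u0 uwu) wu1
  (le_trans Cmu (ler_wpM2l (ltW m0) uwu)).
have := dikz_sin_term_le1 m0 u0 uwu wu1.
have := dikz_cos_term_le m0 u0 w1 wu1 Lmu mwu; rewrite mulrBr.
rewrite -(lnK Dv0) -[X in _ <= _ * X](lnK Du0) -expRD ler_expR.
lra.
Qed.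
End DIKZDifference.

Section LargeScale.
Variable R : realType.
Variables (x : R) (n : nat).
Local Notation L := (ln (n%:R : R)).
Local Notation s := (Num.sqrt (2 * L)).
Hypothesis s_large : 13 + 8 * `|x| <= s.

Let s_ge13 : 13 <= s.
Proof. by have := normr_ge0 x; have := s_large; lra. Qed.

Let L_gt0 : 0 < L.
Proof. by rewrite -(pmulr_rgt0 _ (ltr0n R 2)) -sqrtr_gt0; have := s_ge13; lra. Qed.

Let sqr_s : s ^+ 2 = 2 * L.
Proof. by rewrite sqr_sqrtr // mulr_ge0 // ltW. Qed.

Let n_gt0 : 0 < n%:R :> R.
Proof.
rewrite ltNge; apply/negP => n0.
by have := ln_le0 (le_trans n0 ler01); have := L_gt0; lra.
Qed.

Let nGn_eq : n%:R * Gn n x = (8 * x - 5 * ln (s ^+ 2)) / (2 * s) + 4 * s.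
Proof.
have sqrt32 : Num.sqrt (32 * L) = 4 * s.
  rewrite (_ : 32 * L = 4 ^+ 2 * (2 * L)); last by ring.
  by rewrite sqrtrM ?sqrtr_sqr ?ger0_norm // sqr_ge0.
rewrite /Gn sqrt32 sqr_s; field.
by rewrite !gt_eqF //; have := s_ge13; lra.
Qed.

Lemma nGn_bounds : 3 * s <= n%:R * Gn n x <= 5 * s.
Proof.
have s13 := s_ge13; have xs := s_large.
have lns0 : 0 <= ln (s ^+ 2) by apply: ln_ge0; rewrite expr2; nra.
have lns : ln (s ^+ 2) <= 2 * s.
  by rewrite lnXn ?mulr2n; have := @ln_sublinear R s; lra.
have x_le := ler_norm x; have x_ge : - `|x| <= x by rewrite lerNnormlW.
have num_le : `|8 * x - 5 * ln (s ^+ 2)| <= s * (2 * s).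
  by rewrite ler_norml; apply/andP; split; nra.
move: num_le; rewrite ler_norml nGn_eq => /andP[lo hi].
have s2 : 0 < 2 * s by lra.
have dlo : - s <= (8 * x - 5 * ln (s ^+ 2)) / (2 * s) by rewrite ler_pdivlMr //; lra.
have dhi : (8 * x - 5 * ln (s ^+ 2)) / (2 * s) <= s by rewrite ler_pdivrMr.
by apply/andP; split; lra.
Qed.

Lemma Gn_gt0 : 0 < Gn n x.
Proof.
have /andP[lo _] := nGn_bounds.
by rewrite -(pmulr_rgt0 _ n_gt0); have := s_ge13; lra.
Qed.

Lemma half_Gn_gt a : a <= s -> a / n%:R < Gn n x / 2.
Proof.
move=> a_le; have /andP[lo _] := nGn_bounds.
rewrite -(ltr_pM2r n_gt0) divfK ?gt_eqF //.
have -> : Gn n x / 2 * n%:R = n%:R * Gn n x / 2 by ring.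
by have := s_ge13; lra.
Qed.

Lemma mul_half_Gn_lt1 A : 0 <= A -> 5 * A <= s -> A * Gn n x / 2 < 1.
Proof.
move=> A0 As; have /andP[_ hi] := nGn_bounds; have s13 := s_ge13.
rewrite -(ltr_pM2r n_gt0) mul1r.
have -> : A * Gn n x / 2 * n%:R = A * (n%:R * Gn n x) / 2 by ring.
have AnG : A * (n%:R * Gn n x) <= A * (5 * s) by rewrite ler_wpM2l.
have As2 : A * (5 * s) <= s ^+ 2 by rewrite expr2; nra.
by have := ln_sublinear n_gt0; have := sqr_s; lra.
Qed.

Lemma quarter_nGn_ge : 3 * s / 4 <= n%:R * (Gn n x / 2 / 2).
Proof.
have /andP[lo _] := nGn_bounds.
have -> : n%:R * (Gn n x / 2 / 2) = n%:R * Gn n x / 4 by field.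
lra.
Qed.

Lemma ln_le_sqr_nGn : L <= (n%:R * (Gn n x / 2 / 2)) ^+ 2.
Proof.
have lo := quarter_nGn_ge; have s13 := s_ge13.
have : (3 * s / 4) ^+ 2 <= (n%:R * (Gn n x / 2 / 2)) ^+ 2.
  by rewrite ler_pXn2r ?nnegrE //; lra.
have := sqr_s; rewrite !expr2; nra.
Qed.

Lemma sqr_nGn_le w : 0 <= w -> 5 * w <= s ->
  (n%:R * (w * (Gn n x / 2 / 2))) ^+ 2 <= n%:R.
Proof.
move=> w0 ws; have /andP[lo hi] := nGn_bounds; have s13 := s_ge13.
have -> : n%:R * (w * (Gn n x / 2 / 2)) = w * (n%:R * Gn n x) / 4 by field.
have wnG : w * (n%:R * Gn n x) <= w * (5 * s) by rewrite ler_wpM2l.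
have ws2 : w * (5 * s) <= s ^+ 2 by rewrite expr2; nra.
have s2 := sqr_s; have L0 := L_gt0.
have n1 : 1 <= n%:R :> R by rewrite ler1n -(ltr0n R) n_gt0.
have L2 := sqr_ln_le n1.
have : (w * (n%:R * Gn n x) / 4) ^+ 2 <= (L / 2) ^+ 2.
  by rewrite ler_pXn2r ?nnegrE //; [lra | nra | lra].
rewrite !expr2 in L2 *; lra.
Qed.

Lemma Dn_ratio_le c0 C w (Du Dv : R) :
  1 <= w -> 5 * w <= s -> 32 * `|C| <= s -> 0 < Du -> 0 < Dv ->
  `|ln Du - dikz_main c0 n%:R (Gn n x / 2 / 2)|
    <= C / (n%:R * sin (Gn n x / 2 / 2)) ->
  `|ln Dv - dikz_main c0 n%:R (w * Gn n x / 2 / 2)|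
    <= C / (n%:R * sin (w * Gn n x / 2 / 2)) ->
  Dv <= expR (1 - (w - 1) * L) * Du.
Proof.
move=> w1 ws Cs Du0 Dv0 Hu.
rewrite (_ : w * Gn n x / 2 / 2 = w * (Gn n x / 2 / 2)); last by rewrite !mulrA.
have G0 := Gn_gt0; have s13 := s_ge13.
apply: dikz_ratio_le Hu => //.
- by rewrite !divr_gt0.
- by have := mul_half_Gn_lt1 (le_trans ler01 w1) ws; rewrite mulrA; lra.
- exact: ln_le_sqr_nGn.
- by apply: sqr_nGn_le; lra.
- by have := quarter_nGn_ge; lra.
Qed.
End LargeScale.

Theorem lemma9 (R : realType) (c0 s0 : R) (hs0 : 0 < s0)
    (hDIKZ : DIKZ_asymptotics c0 s0) :
  forall (x A : R), 1 < A ->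
  exists N3 : R, 0 < N3 /\
  forall n : nat, N3 < n%:R ->
  forall w : R, 1 <= w -> w <= A ->
    [/\ s0 / n%:R < Gn n x / 2,
        Gn n x / 2 < A * Gn n x / 2,
        A * Gn n x / 2 < pi / 2 &
        Dn n (w * Gn n x / 2)
          <= expR (1 - (w - 1) * ln n%:R) * Dn n (Gn n x / 2)].
Proof.
move=> x A A1.
have pi2_ge1 : 1 <= pi / 2 :> R by rewrite ler_pdivlMr // mul1r pi_ge2.
have [C [N dikz]] := hDIKZ (pi / 2) (lt_le_trans ltr01 pi2_ge1).
pose S : R := 13 + 8 * `|x| + 5 * A + s0 + 32 * `|C|.
have [x0 C0] := (normr_ge0 x, normr_ge0 C).
have S_ge0 : 0 <= S by rewrite /S; lra.
exists (Num.max N%:R (expR (S ^+ 2))).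
split=> [|n]; first by rewrite lt_max expR_gt0 orbT.
rewrite gt_max ltr_nat => /andP[/ltnW nN /(sqrt_2ln_ge S_ge0) sS] w w1 wA.
set s := Num.sqrt (2 * ln n%:R) in sS *.
have [s_large sA sC ss0] :
    [/\ 13 + 8 * `|x| <= s, 5 * A <= s, 32 * `|C| <= s & s0 <= s].
  by split; apply: le_trans sS; rewrite /S; lra.
have G0 := Gn_gt0 s_large.
have AG1 := mul_half_Gn_lt1 s_large (ltW (lt_trans ltr01 A1)) sA.
have halfG := half_Gn_gt s_large ss0.
have wG_ge : Gn n x / 2 <= w * Gn n x / 2 by rewrite ler_pM2r ?ler_peMl // ltW.
have wG_le : w * Gn n x / 2 <= A * Gn n x / 2 by rewrite !ler_pM2r.
have pi_half : pi - pi / 2 = pi / 2 :> R by rewrite {1}(splitr pi) addrK.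
have [Du0 Hu] := dikz n nN (Gn n x / 2) halfG ltac:(lra).
have [Dv0 Hv] := dikz n nN (w * Gn n x / 2) ltac:(lra) ltac:(lra).
split; [by [] | by rewrite ltr_pM2r ?ltr_pMl | by lra |].
apply: (Dn_ratio_le s_large) Hu Hv => //.
by apply: le_trans sA; lra.
Qed.
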